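(* Let $m\ge1$ and $k\ge0$ be integers. Then for every $n\in[km,(k+1)m)$ and $l\in\{1,\dots,d\}$, $$\mathcal D(\mathfrak x^l_n)\le\mathcal D(\mathfrak x^l_0)\big(1+\mathcal H^l_{[km,n)}\big)\prod_{s=1}^k\Big(1-\gamma(1-\gamma)^{m-1}\mathcal G_{[(s-1)m,sm)}+\mathcal H^l_{[(s-1)m,sm)}\Big),$$ with the convention $\mathcal H^l_{[km,km)}=0$.
   Context: Setting (random batch CBO). Fix integers $N\ge2$, $d\ge1$, batch size $P\ge2$, drift $\gamma\in(0,1)$, noise level $\zeta\ge0$; $\mathcal N=\{1,\dots,N\}$. Weight functions $\omega_{S,j}:(\mathbb R^d)^N\to[0,\infty)$ for nonempty $S\subseteq\mathcal N$, $j\in\mathcal N$, with $\sum_{j\in S}\omega_{S,j}=1$ and $\omega_{S,j}=0$ for $j\notin S$. $\mathcal A$ is the set of partitions of $\mathcal N$ into $\lceil N/P\rceil$ batches, all of size $P$ except possibly one of size at most $P$; $(\mathcal B^n)_{n\ge0}$ i.i.d. uniform on $\mathcal A$; $[i]_n$ is the batch of $\mathcal B^n$ containing $i$. Noise arrays $(\eta^{i,l}_n)_{i,l}$ are i.i.d. in $n$ with $\mathbb E\eta^{i,l}_n=0$, $\mathbb E|\eta^{i,l}_n|^2\le\zeta^2$; initial data, batches, and noises are mutually independent. The dynamics is $\mathbf x^i_{n+1}=\mathbf x^i_n-\gamma(\mathbf x^i_n-\bar{\mathbf x}^{[i]_n,*}_n)-\sum_{l=1}^d(x^{i,l}_n-\bar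 x^{[i]_n,*,l}_n)\eta^{i,l}_n\mathbf e_l$ with $\bar{\mathbf x}^{S,*}_n=\sum_j\omega_{S,j}(X_n)\mathbf x^j_n$, $X_n=(\mathbf x^1_n,\dots,\mathbf x^N_n)$. Let $\mathfrak x^l_n:=(x^{1,l}_n,\dots,x^{N,l}_n)^\top$, $\mathcal D(\mathbf z):=\max_iz_i-\min_iz_i$, $H^l_n:=\mathrm{diag}(\eta^{1,l}_n,\dots,\eta^{N,l}_n)$, $\|A\|_{1,\infty}:=\max_i\sum_j|a_{ij}|$. For $n\ge0$, $m\ge1$: $\mathcal G_{[n,n+m)}:=\min_{i,j}|\{r:n\le r<n+m,[i]_r=[j]_r\}|$ and $\mathcal H^l_{[n,n+m)}:=2\big[\prod_{r=n}^{n+m-1}(1+2\|H^l_r\|_{1,\infty})-1\big]$. *)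

From HB Require Import structures.
From mathcomp Require Import all_boot all_order all_algebra.
From mathcomp Require Import reals.
Set Implicit Arguments. Unset Strict Implicit. Unset Printing Implicit Defensive.
Import Order.TTheory GRing.Theory Num.Theory.
Local Open Scope ring_scope.

Section CBO.
Variable R : realType.

(* maximum / minimum of a real function over a (nonempty) finite type;
   the value 0 for an empty type is an irrelevant default. *)
Definition fmax (T : finType) (z : T -> R) : R :=
  match [pick i : T] with
  | Some i0 => \big[Num.max/z i0]_(i : T) z i
  | None => 0 end.
Definition fmin (T : finType) (z : T -> R) : R :=
  match [pick i : T] with
  | Some i0 => \big[Num.min/z i0]_(i : T) z i
  | None => 0 end.

Definition Dspread (N : nat) (z : 'I_N -> R) : R := fmax z - fmin z.

Definition norm1inf (N : nat) (A : 'M[R]_N) : R :=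
  fmax (fun i : 'I_N => \sum_(j < N) `|A i j|).

(* The admissible batch partitions: partitions of {1..N} into ceil(N/P)
   batches, all of size P except possibly one of size at most P. *)
Definition batch_partition (N P : nat) (Pt : {set {set 'I_N}}) : bool :=
  [&& partition Pt [set: 'I_N],
      #|Pt| == ((N + P).-1 %/ P)%N &
      [exists B0 in Pt, (#|B0| <= P)%N && [forall B in Pt, (B != B0) ==> (#|B| == P)]]].

Definition batch_of (N : nat) (Pt : {set {set 'I_N}}) (i : 'I_N) : {set 'I_N} :=
  pblock Pt i.

Definition xbar (N d : nat)
  (omega : {set 'I_N} -> 'I_N -> ('I_N -> 'I_d -> R) -> R)
  (S : {set 'I_N}) (X : 'I_N -> 'I_d -> R) (l : 'I_d) : R :=
  \sum_(j < N) omega S j X * X j l.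

Fixpoint cbo (N d : nat) (gamma : R)
  (omega : {set 'I_N} -> 'I_N -> ('I_N -> 'I_d -> R) -> R)
  (B : nat -> {set {set 'I_N}}) (eta : nat -> 'I_N -> 'I_d -> R)
  (x0 : 'I_N -> 'I_d -> R) (n : nat) : 'I_N -> 'I_d -> R :=
  match n with
  | 0 => x0
  | n'.+1 =>
      let X := cbo gamma omega B eta x0 n' in
      fun i l =>
        X i l - gamma * (X i l - xbar omega (batch_of (B n') i) X l)
              - (X i l - xbar omega (batch_of (B n') i) X l) * eta n' i l
  end.

Definition Gcal (N : nat) (B : nat -> {set {set 'I_N}}) (n m : nat) : R :=
  fmin (fun ij : 'I_N * 'I_N =>
    (#|[set r : 'I_(n + m) | (n <= r)%N &&
         (batch_of (B r) ij.1 == batch_of (B r) ij.2)]|)%:R).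

Definition Hmat (N d : nat) (eta : nat -> 'I_N -> 'I_d -> R) (l : 'I_d) (r : nat)
  : 'M[R]_N := diag_mx (\row_(i < N) eta r i l).

(* H^l_{[n,n+m)} = 2 [ prod_{r=n}^{n+m-1} (1 + 2 ||H^l_r||_{1,oo}) - 1 ];
   for m = 0 this is 0, matching the convention H^l_{[km,km)} = 0. *)
Definition Hcal (N d : nat) (eta : nat -> 'I_N -> 'I_d -> R) (l : 'I_d) (n m : nat)
  : R := 2 * (\prod_(n <= r < n + m) (1 + 2 * norm1inf (Hmat eta l r)) - 1).

End CBO.

From HB Require Import structures.
From mathcomp Require Import all_boot all_order all_algebra.
From mathcomp Require Import reals.
From mathcomp Require Import ring lra.
Import Order.TTheory GRing.Theory Num.Theory.
Set Implicit Arguments. Unset Strict Implicit. Unset Printing Implicit Defensive.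
Local Open Scope ring_scope.

(* Besides the true trajectory
   y_r = x^{.,l}_r we run the noise-free averaging dynamics with the SAME
   batch weights W_r (those of the true trajectory):
     K_{t+1} = (1 - gamma) K_t + gamma W_{n+t} K_t,   K_0 = Id,
   a row-stochastic "transition kernel", and the forecast z_t = K_t y_n.
   (1) Since z_t is a convex combination of y_n, and the noise enters
       multiplicatively through |eta^{i,l}_r| <= ||H^l_r||_{1,oo}, the forecast
       error satisfies |y_{n+t} - z_t| <= (prod_r (1 + 2||H^l_r||) - 1) D(y_n)
       = H^l_{[n,n+t)}/2 D(y_n); hence D(y_{n+t}) <= (1 + H) D(y_n).
   (2) Two rows K_t(i,.), K_t(j,.) overlap by at least
       gamma (1-gamma)^{t-1} #{r : [i]_r = [j]_r}, so by the Dobrushin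
       overlap bound z_t(i) - z_t(j) <= (1 - gamma (1-gamma)^{t-1} G) D(y_n).
   Combining (1) and (2) on every full block of length m and (1) alone on the
   final partial block yields the theorem by induction on the number of blocks.
   The file first develops finite extrema, convex combinations and a one-step
   real inequality, then the kernel/forecast analysis, then the block bounds. *)

Section FiniteExtrema.
Variable R : realType.

Lemma fmax_ge (T : finType) (z : T -> R) (i : T) : z i <= fmax z.
Proof.
rewrite /fmax; case: pickP => [i0 _|/(_ i) //].
by apply: le_bigmax_seq; rewrite ?mem_index_enum.
Qed.

Lemma fmin_le (T : finType) (z : T -> R) (i : T) : fmin z <= z i.
Proof.
rewrite /fmin; case: pickP => [i0 _|/(_ i) //].
by apply: ge_bigmin_seq; rewrite ?mem_index_enum.
Qed.

Lemma fmax_le (T : finType) (z : T -> R) (c : R) (i0 : T) :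
  (forall i, z i <= c) -> fmax z <= c.
Proof. by move=> zc; rewrite /fmax; case: pickP => [j _|/(_ i0) //]; exact: bigmax_le. Qed.

Lemma fmin_ge (T : finType) (z : T -> R) (c : R) (i0 : T) :
  (forall i, c <= z i) -> c <= fmin z.
Proof. by move=> zc; rewrite /fmin; case: pickP => [j _|/(_ i0) //]; exact: le_bigmin. Qed.

Lemma fmax_ge0 (T : finType) (z : T -> R) : (forall i, 0 <= z i) -> 0 <= fmax z.
Proof.
move=> z_ge0; have [i0 _|T0] := pickP (@predT T).
  exact: le_trans (z_ge0 i0) (fmax_ge z i0).
by rewrite /fmax; case: pickP => // i; have := T0 i.
Qed.

Lemma Dspread_ge (N : nat) (z : 'I_N -> R) (i j : 'I_N) : z i - z j <= Dspread z.
Proof. by rewrite /Dspread lerB ?fmax_ge ?fmin_le. Qed.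

Lemma Dspread_ge0 (N : nat) (z : 'I_N -> R) : 0 <= Dspread z.
Proof.
case: N z => [|N] z; last by have := Dspread_ge z ord0 ord0; rewrite subrr.
rewrite /Dspread /fmax /fmin.
by case: pickP => [[] //|_]; rewrite subrr.
Qed.

Lemma Dspread_le (N : nat) (z : 'I_N -> R) (c : R) (i0 : 'I_N) :
  (forall i j, z i - z j <= c) -> Dspread z <= c.
Proof.
move=> zc; rewrite /Dspread lerBlDr.
apply: (fmax_le i0) => i; rewrite -lerBlDl.
by apply: (fmin_ge i0) => j; have := zc i j; lra.
Qed.

End FiniteExtrema.

Section ConvexCombination.
Variables (R : numDomainType) (N : nat).

Lemma convex_le (a v : 'I_N -> R) (c : R) :
  (forall j, 0 <= a j) -> \sum_j a j = 1 ->
  (forall j, v j <= c) -> \sum_j a j * v j <= c.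
Proof.
move=> a_ge0 a_sum1 vc; apply: le_trans (_ : \sum_j a j * c <= _).
  by apply: ler_sum => j _; exact: ler_wpM2l.
by rewrite -mulr_suml a_sum1 mul1r.
Qed.

Lemma convex_ge (a v : 'I_N -> R) (c : R) :
  (forall j, 0 <= a j) -> \sum_j a j = 1 ->
  (forall j, c <= v j) -> c <= \sum_j a j * v j.
Proof.
move=> a_ge0 a_sum1 cv; apply: le_trans (_ : \sum_j a j * c <= _).
  by rewrite -mulr_suml a_sum1 mul1r.
by apply: ler_sum => j _; exact: ler_wpM2l.
Qed.

End ConvexCombination.

(* Dobrushin's overlap bound: two weightings of v of total mass 1 differ by
   at most their non-overlapping mass times D(v). *)
Lemma overlap_contraction (R : realType) (N : nat) (a b v : 'I_N -> R) :
  \sum_k a k = 1 -> \sum_k b k = 1 ->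
  \sum_k a k * v k - \sum_k b k * v k
  <= (1 - \sum_k Num.min (a k) (b k)) * Dspread v.
Proof.
move=> a_sum1 b_sum1; set mu := fun k => Num.min (a k) (b k).
have split_mass : \sum_k a k * v k - \sum_k b k * v k
    = \sum_k (a k - mu k) * v k - \sum_k (b k - mu k) * v k.
  by rewrite -!sumrB; apply: eq_bigr => k _; ring.
have upper : \sum_k (a k - mu k) * v k <= \sum_k (a k - mu k) * fmax v.
  apply: ler_sum => k _; apply: ler_wpM2l; last exact: fmax_ge.
  by rewrite subr_ge0 /mu ge_min lexx.
have lower : \sum_k (b k - mu k) * fmin v <= \sum_k (b k - mu k) * v k.
  apply: ler_sum => k _; apply: ler_wpM2l; last exact: fmin_le.
  by rewrite subr_ge0 /mu ge_min lexx orbT.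
rewrite -!mulr_suml !sumrB a_sum1 b_sum1 in upper lower.
rewrite split_mass /Dspread; lra.
Qed.

Lemma prod_1D_ge1 (R : realDomainType) (s : seq nat) (F : nat -> R) :
  (forall i, 0 <= F i) -> 1 <= \prod_(i <- s) (1 + F i).
Proof.
move=> F_ge0; elim: s => [|a s IH]; rewrite ?big_nil ?big_cons //.
by have := F_ge0 a; nra.
Qed.

(* One step of a multiplicatively perturbed averaging against its noise-free
   counterpart: u, A are the true value and batch average, zi, Az their
   forecasts (within e), zi and Az are at distance at most D, and v is the
   noise of size at most h. *)
Lemma perturbed_step_error (R : realFieldType) (g u zi A Az v e D h : R) :
  0 <= g <= 1 -> `|u - zi| <= e -> `|A - Az| <= e -> `|zi - Az| <= D ->
  `|v| <= h ->
  `|u - g * (u - A) - (u - A) * v - ((1 - g) * zi + g * Az)|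
  <= (1 + 2 * h) * e + h * D.
Proof.
move=> /andP [g0 g1] err_u err_A gap_z noise_v.
have -> : u - g * (u - A) - (u - A) * v - ((1 - g) * zi + g * Az)
   = (1 - g) * (u - zi) + g * (A - Az) - ((u - zi) + (zi - Az) - (A - Az)) * v.
  by ring.
have h0 : 0 <= h := le_trans (normr_ge0 v) noise_v.
have drift : `|u - zi + (zi - Az) - (A - Az)| <= 2 * e + D.
  apply: le_trans (ler_normB _ _) _.
  by apply: le_trans (lerD (ler_normD _ _) (lexx _)) _; lra.
have noise_term : `|(u - zi + (zi - Az) - (A - Az)) * v| <= (2 * e + D) * h.
  by rewrite normrM; apply: ler_pM.
have lazy_term : `|(1 - g) * (u - zi)| <= (1 - g) * e.
  by rewrite normrM ger0_norm ?subr_ge0 //; apply: ler_wpM2l; rewrite ?subr_ge0.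
have avg_term : `|g * (A - Az)| <= g * e.
  by rewrite normrM ger0_norm //; apply: ler_wpM2l.
apply: le_trans (ler_normB _ _) _.
apply: le_trans (lerD (ler_normD _ _) (lexx _)) _; lra.
Qed.

Lemma batch_of_self (N P : nat) (Pt : {set {set 'I_N}}) (i : 'I_N) :
  batch_partition P Pt -> i \in batch_of Pt i.
Proof.
by case/and3P => /and3P [/eqP cover_Pt _ _] _ _; rewrite mem_pblock cover_Pt in_setT.
Qed.

Lemma norm1inf_ge0 (R : realType) (N : nat) (A : 'M[R]_N) : 0 <= norm1inf A.
Proof. by apply: fmax_ge0 => i; apply: sumr_ge0 => j _. Qed.

Lemma eta_le_norm1inf (R : realType) (N d : nat) (eta : nat -> 'I_N -> 'I_d -> R)
    (l : 'I_d) (r : nat) (i : 'I_N) :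
  `|eta r i l| <= norm1inf (Hmat eta l r).
Proof.
apply: le_trans (fmax_ge _ i).
rewrite (bigD1 i) //= /Hmat !mxE eqxx mulr1n big1 ?addr0 //.
by move=> j /negbTE; rewrite !mxE eq_sym => ->; rewrite mulr0n normr0.
Qed.

Lemma Hcal_ge0 (R : realType) (N d : nat) (eta : nat -> 'I_N -> 'I_d -> R)
    (l : 'I_d) (n t : nat) :
  0 <= Hcal eta l n t.
Proof.
have := prod_1D_ge1 (index_iota n (n + t))
  (fun r => mulr_ge0 (ler0n R 2) (norm1inf_ge0 (Hmat eta l r))).
by rewrite /Hcal; lra.
Qed.

Section Trajectory.
Variables (R : realType) (N d : nat) (gamma : R)
  (omega : {set 'I_N} -> 'I_N -> ('I_N -> 'I_d -> R) -> R)
  (B : nat -> {set {set 'I_N}}) (eta : nat -> 'I_N -> 'I_d -> R)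
  (x0 : 'I_N -> 'I_d -> R) (l : 'I_d) (i0 : 'I_N).
Hypotheses (gamma_gt0 : 0 < gamma) (gamma_lt1 : gamma < 1).
Hypothesis omega_ge0 : forall S X, S != set0 -> forall j, 0 <= omega S j X.
Hypothesis omega_sum1 : forall S X, S != set0 -> \sum_(j in S) omega S j X = 1.
Hypothesis omega_out :
  forall S X, S != set0 -> forall j, j \notin S -> omega S j X = 0.
Hypothesis batch_self : forall r i, i \in batch_of (B r) i.

Let gamma_ge0 : 0 <= gamma.
Proof. exact: ltW. Qed.
Let gamma01 : 0 <= gamma <= 1.
Proof. by rewrite gamma_ge0 ltW. Qed.
Let lazy_gt0 : 0 < 1 - gamma.
Proof. by rewrite subr_gt0. Qed.

Definition traj (r : nat) (i : 'I_N) : R := cbo gamma omega B eta x0 r i l.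
Definition wt (r : nat) (i j : 'I_N) : R :=
  omega (batch_of (B r) i) j (cbo gamma omega B eta x0 r).
Definition noise (r : nat) : R := norm1inf (Hmat eta l r).

Lemma traj_step r i :
  traj r.+1 i = traj r i - gamma * (traj r i - \sum_j wt r i j * traj r j)
                - (traj r i - \sum_j wt r i j * traj r j) * eta r i l.
Proof. by []. Qed.

Let batch_neq0 r i : batch_of (B r) i != set0.
Proof. by apply/set0Pn; exists i. Qed.

Lemma wt_ge0 r i j : 0 <= wt r i j.
Proof. exact: omega_ge0. Qed.

Lemma wt_sum1 r i : \sum_j wt r i j = 1.
Proof.
rewrite (bigID (mem (batch_of (B r) i))) /= [X in _ + X]big1 ?addr0.
  exact: omega_sum1.
by move=> j; apply: omega_out.
Qed.

Lemma wt_same_batch r i j :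
  batch_of (B r) i = batch_of (B r) j -> wt r i =1 wt r j.
Proof. by rewrite /wt => ->. Qed.

Fixpoint kern (n t : nat) (i k : 'I_N) {struct t} : R :=
  if t is t'.+1 then
    (1 - gamma) * kern n t' i k + gamma * \sum_j wt (n + t') i j * kern n t' j k
  else (i == k)%:R.

Lemma kern_ge0 n t i k : 0 <= kern n t i k.
Proof.
elim: t i k => [|t IH] i k /=; first by rewrite ler0n.
apply: addr_ge0; apply: mulr_ge0 => //; first exact: ltW.
by apply: sumr_ge0 => j _; exact: mulr_ge0 (wt_ge0 _ _ _) (IH _ _).
Qed.

Lemma kern_sum1 n t i : \sum_k kern n t i k = 1.
Proof.
elim: t i => [|t IH] i /=.
  by rewrite (bigD1 i) //= eqxx big1 ?addr0 // => k; rewrite eq_sym => /negbTE ->.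
rewrite big_split /= -!mulr_sumr IH exchange_big /=.
under eq_bigr => j _ do rewrite -mulr_sumr IH mulr1.
by rewrite wt_sum1; ring.
Qed.

(* The lazy part alone keeps mass (1 - gamma)^t on the diagonal. *)
Lemma kern_diag n t k : (1 - gamma) ^+ t <= kern n t k k.
Proof.
elim: t => [|t IH] /=; first by rewrite expr0 eqxx.
rewrite exprS -[X in X <= _]addr0; apply: lerD.
  by apply: ler_wpM2l IH; exact: ltW.
apply: mulr_ge0 => //.
by apply: sumr_ge0 => j _; exact: mulr_ge0 (wt_ge0 _ _ _) (kern_ge0 _ _ _ _).
Qed.

(* Mass reaching k from i: every step r at which i puts weight on k
   contributes gamma (1 - gamma)^t up to the final lazy factor. *)
Lemma kern_lower n t i k :
  gamma * (1 - gamma) ^+ t * \sum_(r < t) wt (n + r) i k <= (1 - gamma) * kern n t i k.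
Proof.
elim: t => [|t IH] /=.
  by rewrite big_ord0 mulr0; apply: mulr_ge0; [exact: ltW | exact: ler0n].
have via_k : (1 - gamma) ^+ t * wt (n + t) i k
    <= \sum_j wt (n + t) i j * kern n t j k.
  rewrite (bigD1 k) //= mulrC -[X in X <= _]addr0 lerD ?ler_wpM2l ?wt_ge0 ?kern_diag //.
  by rewrite sumr_ge0 // => j _; rewrite mulr_ge0 ?wt_ge0 ?kern_ge0.
have IH' := ler_wpM2l (ltW lazy_gt0) IH.
have via_k' := ler_wpM2l (mulr_ge0 (ltW lazy_gt0) gamma_ge0) via_k.
rewrite big_ord_recr /= exprS.
set S := \sum_(r < t) _ in IH IH' *.
set W := \sum_j _ in via_k via_k' *.
lra.
Qed.

Definition forecast (n t : nat) (i : 'I_N) : R := \sum_k kern n t i k * traj n k.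

Lemma forecast_step n t i :
  forecast n t.+1 i
  = (1 - gamma) * forecast n t i + gamma * \sum_j wt (n + t) i j * forecast n t j.
Proof.
rewrite /forecast /=.
under eq_bigr => k _ do rewrite mulrDl -!mulrA mulr_suml.
rewrite big_split /= -!mulr_sumr; congr (_ + _ * _).
rewrite exchange_big /=; apply: eq_bigr => j _.
by rewrite mulr_sumr; apply: eq_bigr => k _; rewrite mulrA.
Qed.

Lemma forecast_le_max n t i : forecast n t i <= fmax (traj n).
Proof. by apply: convex_le; [exact: kern_ge0 | exact: kern_sum1 | exact: fmax_ge]. Qed.

Lemma forecast_ge_min n t i : fmin (traj n) <= forecast n t i.
Proof. by apply: convex_ge; [exact: kern_ge0 | exact: kern_sum1 | exact: fmin_le]. Qed.

Definition growth (n t : nat) : R := \prod_(n <= r < n + t) (1 + 2 * noise r).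

Lemma Hcal_growth n t : Hcal eta l n t = 2 * (growth n t - 1).
Proof. by []. Qed.

Lemma growth_step n t : growth n t.+1 = growth n t * (1 + 2 * noise (n + t)).
Proof. by rewrite /growth addnS big_nat_recr //= leq_addr. Qed.

Lemma forecast_error n t i :
  `|traj (n + t) i - forecast n t i| <= (growth n t - 1) * Dspread (traj n).
Proof.
have D_ge0 := Dspread_ge0 (traj n).
elim: t i => [|t IH] i.
  rewrite /growth addn0 big_geq // subrr mul0r /forecast /=.
  rewrite (bigD1 i) //= eqxx mul1r big1 ?addr0 ?subrr ?normr0 //.
  by move=> k; rewrite eq_sym => /negbTE ->; rewrite mul0r.
have err_avg : `|\sum_j wt (n + t) i j * traj (n + t) j
                 - \sum_j wt (n + t) i j * forecast n t j|
               <= (growth n t - 1) * Dspread (traj n).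
  rewrite -sumrB; under eq_bigr => j _ do rewrite -mulrBr.
  apply: le_trans (ler_norm_sum _ _ _) _.
  under eq_bigr => j _ do rewrite normrM (ger0_norm (wt_ge0 _ _ _)).
  by apply: convex_le; [exact: wt_ge0 | exact: wt_sum1 | exact: IH].
have forecast_gap : `|forecast n t i - \sum_j wt (n + t) i j * forecast n t j|
                    <= Dspread (traj n).
  have avg_le : \sum_j wt (n + t) i j * forecast n t j <= fmax (traj n).
    by apply: convex_le; [exact: wt_ge0 | exact: wt_sum1 | exact: forecast_le_max].
  have avg_ge : fmin (traj n) <= \sum_j wt (n + t) i j * forecast n t j.
    by apply: convex_ge; [exact: wt_ge0 | exact: wt_sum1 | exact: forecast_ge_min].
  have := forecast_le_max n t i; have := forecast_ge_min n t i.
  by rewrite ler_norml /Dspread; move: avg_le avg_ge; lra.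
rewrite addnS traj_step forecast_step growth_step.
apply: le_trans (perturbed_step_error gamma01 (IH i) err_avg forecast_gap
                   (eta_le_norm1inf eta l (n + t) i)) _.
have noise_ge0 : 0 <= noise (n + t) := norm1inf_ge0 _.
rewrite -/(noise (n + t)); have := mulr_ge0 noise_ge0 D_ge0; lra.
Qed.

Lemma block_growth n t :
  Dspread (traj (n + t)) <= Dspread (traj n) * (1 + Hcal eta l n t).
Proof.
apply: (Dspread_le i0) => i j.
have := forecast_error n t i; have := forecast_error n t j.
have := forecast_le_max n t i; have := forecast_ge_min n t j.
rewrite Hcal_growth !ler_norml /Dspread; lra.
Qed.

Definition meet (n : nat) (i j : 'I_N) (r : nat) : bool :=
  batch_of (B (n + r)) i == batch_of (B (n + r)) j.

Lemma kern_overlap n m i j : (0 < m)%N ->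
  gamma * (1 - gamma) ^+ m.-1 * \sum_(r < m) ((meet n i j r)%:R : R)
  <= \sum_k Num.min (kern n m i k) (kern n m j k).
Proof.
case: m => [//|m] _ /=; set q := gamma * (1 - gamma) ^+ m.
have q_ge0 : 0 <= q by rewrite mulr_ge0 ?exprn_ge0 ?ltW.
have kern_ge a k : q * \sum_(r < m.+1) wt (n + r) a k <= kern n m.+1 a k.
  rewrite -(ler_pM2l lazy_gt0) (_ : _ * (q * _)
    = gamma * (1 - gamma) ^+ m.+1 * \sum_(r < m.+1) wt (n + r) a k).
    exact: kern_lower.
  by rewrite /q exprS; ring.
have met_le a k : \sum_(r < m.+1) (meet n i j r)%:R * wt (n + r) a k
                  <= \sum_(r < m.+1) wt (n + r) a k.
  by apply: ler_sum => r _; case: (meet n i j r); rewrite ?mul1r ?mul0r ?wt_ge0.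
have met_sym k : \sum_(r < m.+1) (meet n i j r)%:R * wt (n + r) i k
                 = \sum_(r < m.+1) (meet n i j r)%:R * wt (n + r) j k.
  apply: eq_bigr => r _; rewrite /meet.
  by case: eqP => [/wt_same_batch -> //|_]; rewrite !mul0r.
have per_k k : q * \sum_(r < m.+1) (meet n i j r)%:R * wt (n + r) i k
               <= Num.min (kern n m.+1 i k) (kern n m.+1 j k).
  rewrite le_min (le_trans (ler_wpM2l q_ge0 (met_le i k)) (kern_ge i k)) /=.
  by rewrite met_sym (le_trans (ler_wpM2l q_ge0 (met_le j k)) (kern_ge j k)).
apply: le_trans (ler_sum _ (fun k _ => per_k k)).
rewrite -mulr_sumr exchange_big /=.
by under [X in _ <= _ * X]eq_bigr => r _ do rewrite -mulr_sumr wt_sum1 mulr1.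
Qed.

Lemma meet_count n m i j :
  (#|[set r : 'I_(n + m) | (n <= r)%N && (batch_of (B r) i == batch_of (B r) j)]|)%:R
  = \sum_(r < m) ((meet n i j r)%:R : R).
Proof.
rewrite -sum1_card big_mkcond /= natr_sum.
under eq_bigr => r _ do rewrite in_set.
rewrite -(big_mkord xpredT (fun r : nat =>
   ((if (n <= r)%N && (batch_of (B r) i == batch_of (B r) j) then 1 else 0)%N%:R : R))).
rewrite (@big_cat_nat _ _ _ n 0 (n + m)) ?leq_addr //=.
rewrite big_nat_cond big1 ?add0r; last first.
  by move=> r /andP [/andP [_ hr] _]; rewrite leqNgt hr.
rewrite -{1}[n]add0n big_addn addKn big_mkord.
by apply: eq_bigr => r _; rewrite leq_addl /= /meet addnC.
Qed.

Lemma contraction_ge n m i j : (0 < m)%N ->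
  gamma * (1 - gamma) ^+ m.-1 * Gcal R B n m
  <= \sum_k Num.min (kern n m i k) (kern n m j k).
Proof.
move=> m_gt0; apply: le_trans (kern_overlap n i j m_gt0).
have q_ge0 : 0 <= gamma * (1 - gamma) ^+ m.-1 by rewrite mulr_ge0 ?exprn_ge0 ?ltW.
rewrite ler_wpM2l // -meet_count; exact: (fmin_le _ (i, j)).
Qed.

Lemma contraction_factor_ge0 n m : (0 < m)%N ->
  0 <= 1 - gamma * (1 - gamma) ^+ m.-1 * Gcal R B n m.
Proof.
move=> m_gt0; rewrite subr_ge0.
apply: le_trans (contraction_ge n i0 i0 m_gt0) _; rewrite -(kern_sum1 n m i0).
by apply: ler_sum => k _; rewrite ge_min lexx.
Qed.

Lemma block_contraction n m : (0 < m)%N ->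
  Dspread (traj (n + m)) <= Dspread (traj n) *
    (1 - gamma * (1 - gamma) ^+ m.-1 * Gcal R B n m + Hcal eta l n m).
Proof.
move=> m_gt0; apply: (Dspread_le i0) => i j.
have forecast_gap := overlap_contraction (traj n) (kern_sum1 n m i) (kern_sum1 n m j).
have := ler_wpM2r (Dspread_ge0 (traj n)) (lerB (lexx 1) (contraction_ge n i j m_gt0)).
have := forecast_error n m i; have := forecast_error n m j.
move: forecast_gap; rewrite -!/(forecast n m _) Hcal_growth !ler_norml; lra.
Qed.

Lemma iterated_blocks m k : (0 < m)%N ->
  Dspread (traj (k * m)) <= Dspread (traj 0) * \prod_(1 <= s < k.+1)
    (1 - gamma * (1 - gamma) ^+ m.-1 * Gcal R B (s.-1 * m) m + Hcal eta l (s.-1 * m) m).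
Proof.
move=> m_gt0; elim: k => [|k IH]; first by rewrite mul0n big_geq // mulr1.
rewrite big_nat_recr // mulSnr mulrA /=.
apply: le_trans (block_contraction (k * m) m_gt0) _; apply: ler_wpM2r => //.
by rewrite addr_ge0 ?contraction_factor_ge0 ?Hcal_ge0.
Qed.

End Trajectory.

Theorem lemma4p4 (R : realType) (N d P : nat) (gamma : R)
  (omega : {set 'I_N} -> 'I_N -> ('I_N -> 'I_d -> R) -> R)
  (B : nat -> {set {set 'I_N}}) (eta : nat -> 'I_N -> 'I_d -> R)
  (x0 : 'I_N -> 'I_d -> R) :
  (2 <= N)%N -> (1 <= d)%N -> (2 <= P)%N -> 0 < gamma < 1 ->
  (forall S X, S != set0 -> forall j, 0 <= omega S j X) ->
  (forall S X, S != set0 -> \sum_(j in S) omega S j X = 1) ->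
  (forall S X, S != set0 -> forall j, j \notin S -> omega S j X = 0) ->
  (forall n, batch_partition P (B n)) ->
  forall (m k : nat), (1 <= m)%N ->
  forall (n : nat) (l : 'I_d), (k * m <= n < k.+1 * m)%N ->
    Dspread (fun i => cbo gamma omega B eta x0 n i l)
    <= Dspread (fun i => x0 i l) * (1 + Hcal eta l (k * m) (n - k * m))
       * \prod_(1 <= s < k.+1)
           (1 - gamma * (1 - gamma) ^+ m.-1 * Gcal R B (s.-1 * m) m
              + Hcal eta l (s.-1 * m) m).
Proof.
move=> N_ge2 _ _ /andP [gamma_gt0 gamma_lt1] omega_ge0 omega_sum1 omega_out
  B_part m k m_gt0 n l /andP [km_le_n _].
pose i0 : 'I_N := Ordinal (ltnW N_ge2).
have batch_self r i : i \in batch_of (B r) i by exact: batch_of_self (B_part r).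
have last_block := block_growth eta x0 l i0 gamma_gt0 gamma_lt1
  omega_ge0 omega_sum1 omega_out batch_self (k * m) (n - k * m).
rewrite subnKC // in last_block.
have full_blocks := iterated_blocks eta x0 l i0 gamma_gt0 gamma_lt1 omega_ge0 omega_sum1
  omega_out batch_self k m_gt0.
apply: le_trans last_block _; rewrite mulrAC.
apply: ler_wpM2r full_blocks.
by rewrite addr_ge0 ?Hcal_ge0.
Qed.
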